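(* Let $s\ge 1$ and let $i,j$ be integers with $s\le j<i\le 2s$. Define $$U(s,i,j)=(-1)^{s+i+j}\,i\binom{2s}{i}\sum_{j'=0}^{s}\sum_{t=1}^{s-j'}\frac{(-1)^{j'+t+1}}{t}\binom{i-j'-1}{s+t-1}\binom{s}{t-1}\binom{s}{j-j'}\binom{s-j'}{t}^{-1}.$$ Then $U(s,i,j)=(-1)^{j+1}\binom{2s}{j}$.
   Context: Binomial coefficients $\binom{a}{b}$ are zero when $b<0$ or $b>a\ge 0$. An empty inner sum is $0$. *)

From mathcomp Require Import all_boot all_order all_algebra.
Set Implicit Arguments. Unset Strict Implicit. Unset Printing Implicit Defensive.
Import Order.TTheory GRing.Theory Num.Theory.
Local Open Scope ring_scope.

(* U(s,i,j) over the rationals. Within the range s <= j < i <= 2s, 0 <= j' <= s,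
   1 <= t <= s - j', all nat subtractions below are exact (non-truncating). *)
Definition U (s i j : nat) : rat :=
  (-1) ^+ (s + i + j) * i%:R * ('C(2 * s, i))%:R *
  \sum_(0 <= j' < s.+1) \sum_(1 <= t < (s - j').+1)
     ((-1) ^+ (j' + t + 1) / t%:R * ('C(i - j' - 1, s + t - 1))%:R
      * ('C(s, t - 1))%:R * ('C(s, j - j'))%:R / ('C(s - j', t))%:R).

From mathcomp Require Import all_boot all_order all_algebra.
From mathcomp Require Import zify ring.
Import GRing.Theory Num.Theory.

(* Write j = s + e, i = s + e + f + 1 and b = 2s - i, so that s = e + f + b + 1.
   After the substitution q = s - t, the summand of U indexed by (p, t) is a
   constant multiple of C(2s, q+1) g_p (-1)^(q-p) C(q-p, b), where
   g_p = C(s, j-p) C(i-1-p, e+f).  Summing over p <= q < s thus gives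
   sum_(q<s) C(2s, q+1) [X^q] G R_b, with G = sum_p g_p X^p and
   R_b = sum_(r<s) (-1)^r C(r, b) X^r.  Now (1+X)^(b+1) R_b = (-1)^b X^b modulo
   X^s, and a Vandermonde convolution factors G = (1+X)^(b+1) H with deg H <= e+f.
   So [X^q] G R_b = (-1)^b [X^q] X^b H for q < s, the sum over q is the
   coefficient of X^(2s-1) in (1+X)^(2s) X^b H = (1+X)^(i-1) X^b G, and a second
   Vandermonde convolution evaluates it to C(i-1, s) C(2s, j). *)

Lemma big_ord_widen_idx {R : Type} {idx : R} {op : Monoid.law idx} {n1 n2 : nat}
    (F : nat -> R) :
  n1 <= n2 -> (forall i, n1 <= i < n2 -> F i = idx) ->
  \big[op/idx]_(i < n2) F i = \big[op/idx]_(i < n1) F i.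
Proof.
move=> le_n12 F_idx; rewrite -!(big_mkord xpredT F) (big_cat_nat (leq0n n1) le_n12).
rewrite [X in op _ X]big_nat_cond [X in op _ X]big1 ?Monoid.mulm1 //.
by move=> i /andP[/F_idx].
Qed.

Lemma bin_trinomial n m l : 'C(n, m) * 'C(n - m, l) = 'C(n, l) * 'C(n - l, m).
Proof.
have vanish k r : n < k + r -> 'C(n, k) * 'C(n - k, r) = 0.
  move=> lt_n_kr; have [/bin_small-> // | le_kn] := ltnP n k.
  by rewrite (@bin_small (n - k)) ?muln0 //; lia.
have [le_mln | lt_n_ml] := leqP (m + l) n; last by rewrite !vanish // addnC.
have fact_eq k r : k + r <= n ->
    'C(n, k) * 'C(n - k, r) * (k`! * (r`! * (n - k - r)`!)) = n`!.
  move=> le_krn; rewrite -mulnA [X in _ * X]mulnCA (bin_fact (_ : r <= n - k)).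
    by rewrite bin_fact //; lia.
  by lia.
apply/eqP; rewrite -(eqn_pmul2r (_ : 0 < m`! * (l`! * (n - m - l)`!))); last first.
  by rewrite !muln_gt0 !fact_gt0.
by rewrite fact_eq // [X in _ * X]mulnCA subnAC fact_eq // addnC.
Qed.

Lemma Vandermonde_shift f n e :
  \sum_(k < f.+1) 'C(f, k) * 'C(n, e + k) = 'C(f + n, f + e).
Proof.
rewrite -binomial.Vandermonde (big_ord_widen_idx (fun j => 'C(f, j) * 'C(n, f + e - j))
  (leq_addr e f : f.+1 <= (f + e).+1)); last first.
  by move=> j /andP[lt_fj _]; rewrite bin_small.
rewrite (reindex_inj rev_ord_inj) /=; apply: eq_bigr => k _.
by have le_kf := ltn_ord k; rewrite subSS bin_sub // addnBA // [e + f]addnC.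
Qed.

Lemma bin_mul_bin_sum s e f u :
  'C(s, u) * 'C(s + f - u, e + f)
  = \sum_(k < f.+1) 'C(s, e + k) * 'C(f, k) * 'C(s - (e + k), u).
Proof.
have [lt_su | le_us] := ltnP s u.
  rewrite bin_small // mul0n big1 // => k _.
  by rewrite (@bin_small (s - (e + k))) ?muln0 //; lia.
under eq_bigr => k _ do rewrite mulnAC bin_trinomial -mulnA [_ * 'C(f, k)]mulnC.
by rewrite -big_distrr /= Vandermonde_shift addnC addnBA // [e + f]addnC.
Qed.

Local Open Scope ring_scope.

Lemma signr_odd_eq {R : pzRingType} {m n : nat} :
  odd m = odd n -> (-1) ^+ m = (-1) ^+ n :> R.
Proof. by rewrite -signr_odd => ->; rewrite signr_odd. Qed.

Lemma natr_fact_neq0 (F : numDomainType) n : n`!%:R != 0 :> F.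
Proof. by rewrite pnatr_eq0 -lt0n fact_gt0. Qed.

Lemma binr_fact {F : numFieldType} {n k : nat} : (k <= n)%N ->
  'C(n, k)%:R = n`!%:R / (k`!%:R * (n - k)`!%:R) :> F.
Proof.
by move=> le_kn; rewrite -(bin_fact le_kn) !natrM mulfK // mulf_neq0 ?natr_fact_neq0.
Qed.

Lemma sum_triangle_rev (V : nmodType) n (F : nat -> nat -> V) :
  \sum_(0 <= p < n.+1) \sum_(1 <= t < (n - p)%N.+1) F p (n - t)%N
  = \sum_(q < n) \sum_(p < q.+1) F p q.
Proof.
transitivity (\sum_(0 <= p < n.+1) \sum_(p <= q < n) F p q).
  apply: eq_big_nat => p _.
  rewrite big_nat_rev big_add1 (big_addn 0 n p) /=.
  by apply: eq_big_nat => t /andP[_ lt_t]; congr (F p _); lia.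
rewrite big_mkord; under eq_bigr do rewrite big_geq_mkord.
rewrite (exchange_big_dep xpredT) //=; apply: eq_bigr => q _.
by rewrite (big_ord_widen_cond n.+1 xpredT (F^~ q) (leqW (ltn_ord q))).
Qed.

Section AlternatingBinomialSeries.
Context {R : comNzRingType}.
Implicit Types (p : {poly R}) (b M : nat).

Lemma coef_Xadd1_exp n k : (('X + 1) ^+ n : {poly R})`_k = 'C(n, k)%:R.
Proof.
elim: n k => [|n IHn] k; first by rewrite expr0 coef1 bin0n.
rewrite exprS mulrDl mul1r coefD coefXM.
case: k => [|k] /=; rewrite !IHn; first by rewrite !bin0 add0r.
by rewrite binS natrD addrC.
Qed.

Definition alt_bin_poly b M : {poly R} := \poly_(r < M) ((-1) ^+ r * 'C(r, b)%:R).

Lemma alt_bin_polyS b M :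
  alt_bin_poly b M.+1 = alt_bin_poly b M + ((-1) ^+ M * 'C(M, b)%:R) *: 'X^M.
Proof. by rewrite /alt_bin_poly !poly_def big_ord_recr. Qed.

Lemma alt_bin_poly0 b : alt_bin_poly b 0 = 0.
Proof. by rewrite /alt_bin_poly poly_def big_ord0. Qed.

Lemma mulXadd1_alt_bin_poly0 M : ('X + 1) * alt_bin_poly 0 M = 1 - (-1) ^+ M *: 'X^M.
Proof.
elim: M => [|M IHM]; first by rewrite alt_bin_poly0 mulr0 expr0 scale1r subrr.
rewrite alt_bin_polyS mulrDr IHM bin0 mulr1 -!mul_polyC !exprS; ring.
Qed.

Lemma alt_bin_poly_rec b M :
  ('X + 1) * alt_bin_poly b.+1 M + 'X * alt_bin_poly b M
  = ((-1) ^+ M.+1 * 'C(M, b.+1)%:R) *: 'X^M.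
Proof.
elim: M => [|M IHM]; first by rewrite !alt_bin_poly0 !mulr0 addr0 scale0r.
rewrite !alt_bin_polyS !mulrDr addrACA IHM binS natrD -!mul_polyC !exprS; ring.
Qed.

Lemma alt_bin_poly_inverse b M : exists Q : {poly R},
  ('X + 1) ^+ b.+1 * alt_bin_poly b M = (-1) ^+ b *: 'X^b + Q * 'X^M.
Proof.
elim: b => [|b [Q IHb]].
  exists (- ((-1) ^+ M)%:P).
  by rewrite expr1 mulXadd1_alt_bin_poly0 expr0 scale1r mulNr mul_polyC.
pose c : R := (-1) ^+ M.+1 * 'C(M, b.+1)%:R.
exists (c *: ('X + 1) ^+ b.+1 - 'X * Q).
have rec : ('X + 1) * alt_bin_poly b.+1 M = c *: 'X^M - 'X * alt_bin_poly b M.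
  by rewrite -alt_bin_poly_rec addrK.
rewrite exprSr -mulrA rec mulrBr mulrCA IHb -!mul_polyC !exprS; ring.
Qed.

Lemma coef_alt_bin_poly_mul b M p q : (q < M)%N ->
  (('X + 1) ^+ b.+1 * p * alt_bin_poly b M)`_q = (-1) ^+ b * (p * 'X^b)`_q.
Proof.
move=> lt_qM; have [Q eqQ] := alt_bin_poly_inverse b M.
rewrite mulrAC eqQ mulrDl coefD mulrAC [X in _ + X]coefMXn lt_qM addr0.
by rewrite -scalerAl coefZ (mulrC 'X^b).
Qed.

Lemma sum_bin_coef p m n : (size p <= n)%N ->
  \sum_(q < n) 'C(m.+1, q.+1)%:R * p`_q = (('X + 1) ^+ m.+1 * p)`_m.
Proof.
move=> le_pn; rewrite -[p in RHS](take_poly_id le_pn) /take_poly poly_def.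
rewrite mulr_sumr coef_sum; apply: eq_bigr => q _.
rewrite -scalerAr coefZ coefMXn mulrC.
have [lt_mq | le_qm] := ltnP m q; first by rewrite bin_small ?mul0r.
by rewrite coef_Xadd1_exp -{1}(bin_sub (_ : (q.+1 <= m.+1)%N)) ?subSS.
Qed.

End AlternatingBinomialSeries.

Section VandermondeFactorization.
Variables (R : comNzRingType) (s e f b : nat).
Hypothesis def_s : s = (e + f + b).+1.
Local Notation a := (s + e + f)%N.

Definition gcoef p := ('C(s, s + e - p) * 'C(a - p, e + f))%N.
Definition Gpoly : {poly R} := \poly_(p < s.+1) (gcoef p)%:R.
Definition Hpoly : {poly R} :=
  'X^e * \sum_(k < f.+1) ('C(s, e + k) * 'C(f, k))%:R *: ('X + 1) ^+ (f - k).

Lemma Gpoly_factor : Gpoly = ('X + 1) ^+ b.+1 * Hpoly.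
Proof.
apply/polyP => p; rewrite coef_poly mulrCA coefXnM.
have [lt_pe | le_ep] := ltnP p e.
  by rewrite /gcoef (@bin_small s) ?mul0n ?if_same //; lia.
transitivity (('C(s, p - e) * 'C(s + f - (p - e), e + f))%N%:R : R).
  rewrite /gcoef; case: ltnP => [le_ps | lt_sp].
    rewrite -(bin_sub (_ : p - e <= s)%N); last by lia.
    by congr (_ %:R); congr ('C(_, _) * 'C(_, _))%N; lia.
  have [lt_s_pe | le_pe_s] := ltnP s (p - e); first by rewrite bin_small.
  by rewrite (@bin_small (s + f - (p - e))) ?muln0 //; lia.
rewrite bin_mul_bin_sum natr_sum mulr_sumr coef_sum; apply: eq_bigr => k _.
rewrite -scalerAr -exprD coefZ coef_Xadd1_exp -natrM.
by congr ((_ * 'C(_, _))%N%:R); have := ltn_ord k; lia.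
Qed.

Lemma size_HpolyXn : (size (Hpoly * 'X^b)%R <= s)%N.
Proof.
apply/leq_sizeP => q le_sq; rewrite coefMXn coefXnM; case: ifP => // _.
case: ifP => // _; rewrite coef_sum big1 // => k _.
by rewrite coefZ coef_Xadd1_exp (@bin_small (f - k)) ?mulr0 //; lia.
Qed.

Lemma coef_Xadd1_exp_Gpoly :
  (('X + 1) ^+ a * Gpoly)`_a = ('C(a, s) * 'C(s + s, s + e))%:R.
Proof.
rewrite coefMr.
transitivity (\sum_(p < a.+1) ('C(a, s) * ('C(s, p) * 'C(s, s + e - p)))%:R : R).
  apply: eq_bigr => -[p /= le_pa] _; rewrite coef_Xadd1_exp coef_poly.
  case: ltnP => [_ | lt_sp]; last by rewrite (@bin_small s p) // mul0n muln0 mulr0.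
  rewrite -natrM /gcoef bin_sub // mulnCA bin_trinomial.
  have le_sa : (s <= a)%N by lia.
  have -> : (a - (e + f) = s)%N by lia.
  rewrite -(bin_sub le_sa) (_ : a - s = e + f)%N; last by lia.
  by rewrite mulnCA [X in (_ * X)%N]mulnC.
rewrite -natr_sum -big_distrr /=.
rewrite (big_ord_widen_idx (fun p => 'C(s, p) * 'C(s, s + e - p))%N
  (_ : (s + e).+1 <= a.+1)%N).
- by rewrite binomial.Vandermonde.
- by lia.
- by move=> p /andP[lt_sep _]; rewrite bin_small ?muln0 //; lia.
Qed.

Lemma sum_Gpoly_alt_bin_poly :
  \sum_(q < s) 'C(s + s, q.+1)%:R * (Gpoly * alt_bin_poly b s)`_q
  = (-1) ^+ b * ('C(a, s) * 'C(s + s, s + e))%:R.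
Proof.
transitivity ((-1) ^+ b * \sum_(q < s) 'C(s + s, q.+1)%:R * (Hpoly * 'X^b)`_q).
  rewrite mulr_sumr; apply: eq_bigr => q _.
  by rewrite Gpoly_factor coef_alt_bin_poly_mul // mulrCA.
rewrite [in X in X = _](_ : s + s = (a + b).+1)%N; last by lia.
rewrite (sum_bin_coef _ (a + b) _ size_HpolyXn) -addnS exprD -mulrA.
rewrite [_ ^+ b.+1 * _]mulrA -Gpoly_factor mulrA.
by rewrite coefMXn ltnNge leq_addl addnK coef_Xadd1_exp_Gpoly.
Qed.

End VandermondeFactorization.

Section UEvaluation.
Variables s e f b : nat.
Hypothesis def_s : s = (e + f + b).+1.
Local Notation a := (s + e + f)%N.

Definition Uscale : rat := s`!%:R * (e + f)`!%:R * b`!%:R / (s + s)`!%:R.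

Definition Uterm p q : rat :=
  'C(s + s, q.+1)%:R * (gcoef s e f p)%:R * ((-1) ^+ (q - p) * 'C(q - p, b)%:R).

Lemma U_summandE p t : (1 <= t < (s - p).+1)%N ->
  (-1) ^+ (p + t + 1) / t%:R * 'C(a.+1 - p - 1, s + t - 1)%:R
    * 'C(s, t - 1)%:R * 'C(s, s + e - p)%:R / 'C(s - p, t)%:R
  = (-1) ^+ s.+1 * Uscale * Uterm p (s - t).
Proof.
case: t => // t /andP[_]; rewrite ltnS => le_t1_sp.
rewrite /Uterm /Uscale /gcoef (signr_odd_eq (_ : odd (p + t.+1 + 1)
  = odd (s.+1 + (s - t.+1 - p)))) ?exprD; last by lia.
have [lt_b | le_b] := ltnP (s - t.+1 - p) b.
  by rewrite (bin_small lt_b) (@bin_small (a.+1 - p - 1)) ?mulr0 ?mul0r //; lia.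
have -> : (a.+1 - p - 1 = a - p)%N by lia.
have -> : (s + t.+1 - 1 = s + t)%N by lia.
have -> : (t.+1 - 1 = t)%N by lia.
have -> : ((s - t.+1).+1 = s - t)%N by lia.
have le_st : (s + t <= a - p)%N by lia.
have le_ef : (e + f <= a - p)%N by lia.
have le_ts : (t <= s)%N by lia.
have le_ss : (s - t <= s + s)%N by lia.
rewrite (natrM _ 'C(s, s + e - p)) (binr_fact le_st) (binr_fact le_ef) (binr_fact le_b).
rewrite (binr_fact le_ts) (binr_fact le_t1_sp) (binr_fact le_ss).
have -> : (a - p - (s + t) = s - t.+1 - p - b)%N by lia.
have -> : (s - p - t.+1 = s - t.+1 - p)%N by lia.
have -> : (s + s - (s - t) = s + t)%N by lia.
have -> : (a - p - (e + f) = s - p)%N by lia.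
rewrite (factS t) (natrM _ t.+1).
by field; rewrite !natr_fact_neq0 addrC natr1 pnatr_eq0.
Qed.

Lemma Uscale_normalization :
  a.+1%:R * 'C(s + s, a.+1)%:R * Uscale * 'C(a, s)%:R = 1.
Proof.
have le_a1_ss : (a.+1 <= s + s)%N by lia.
have le_sa : (s <= a)%N by lia.
rewrite /Uscale (binr_fact le_a1_ss) (binr_fact le_sa).
have -> : (s + s - a.+1 = b)%N by lia.
have -> : (a - s = e + f)%N by lia.
rewrite (factS a) (natrM _ a.+1).
by field; rewrite !natr_fact_neq0 -!natrD addrC natr1 pnatr_eq0.
Qed.

Lemma sum_Uterm :
  \sum_(q < s) \sum_(p < q.+1) Uterm p q = (-1) ^+ b * ('C(a, s) * 'C(s + s, s + e))%:R.
Proof.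
rewrite -(@sum_Gpoly_alt_bin_poly rat s e f b def_s); apply: eq_bigr => -[q lt_qs] _ /=.
rewrite coefM mulr_sumr; apply: eq_bigr => -[p le_pq] _ /=.
by rewrite /Uterm !coef_poly !ifT ?mulrA //; lia.
Qed.

Lemma U_eval : U s a.+1 (s + e) = (-1) ^+ (s + e).+1 * 'C(2 * s, s + e)%:R.
Proof.
rewrite /U.
under eq_bigr => p _ do under eq_big_nat => t t_range do rewrite U_summandE //.
under eq_bigr do rewrite -mulr_sumr.
rewrite -mulr_sumr sum_triangle_rev sum_Uterm mul2n -addnn natrM.
have sign : (-1) ^+ (s + a.+1 + (s + e)) * (-1) ^+ s.+1 * (-1) ^+ b
            = (-1) ^+ (s + e).+1 :> rat.
  by rewrite -!exprD; apply: signr_odd_eq; lia.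
rewrite -sign -[RHS]mulr1 -[X in _ = _ * X]Uscale_normalization; ring.
Qed.

End UEvaluation.

Theorem corollary6 (s i j : nat) :
  (1 <= s)%N -> (s <= j)%N -> (j < i)%N -> (i <= 2 * s)%N ->
  U s i j = (-1) ^+ j.+1 * ('C(2 * s, j))%:R.
Proof.
move=> s_gt0 le_sj lt_ji le_i2s.
have [e def_j] : exists e, j = (s + e)%N by exists (j - s)%N; lia.
have [f def_i] : exists f, i = (s + e + f).+1 by exists (i - j.+1)%N; lia.
have [b def_s] : exists b, s = (e + f + b).+1 by exists (2 * s - i)%N; lia.
by rewrite def_i def_j (@U_eval s e f b def_s).
Qed.
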